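(* Let $G$ be a connected graph of order $n$. Then $\overline{\mathrm{lcs}}(G)=n-1$ if and only if $G$ has a vertex $v$ for which $\chi(G\setminus v)=\chi(G)-1=\deg(v)$.
   Context: All graphs are finite and simple. For a graph $G=(V,E)$ and an integer $k\ge\chi(G)$, a proper $k$-colouring is a map $c:V\to[k]$ with $c(u)\neq c(v)$ for every edge $uv$. A set $S\subseteq V$ is a determining set for $(G,c)$ if there is no proper $k$-colouring $c'\neq c$ of $G$ with $c'(s)=c(s)$ for all $s\in S$. A critical set for $(G,c)$ is an inclusion-minimal determining set. $\mathrm{lcs}(G,c)$ denotes the size of a largest critical set for $(G,c)$, and $\overline{\mathrm{lcs}}(G,k)$ is the maximum of $\mathrm{lcs}(G,c)$ over all proper $k$-colourings $c$ of $G$; $\overline{\mathrm{lcs}}(G)=\overline{\mathrm{lcs}}(G,\chi(G))$. $G\setminus v$ denotes $G$ with vertex $v$ deleted. *)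

(* A simple graph = symmetric irreflexive relation e on a finType T. *)
From mathcomp Require Import all_boot.
Set Implicit Arguments. Unset Strict Implicit. Unset Printing Implicit Defensive.

Section Graphs.
Variable T : finType.
Variable e : rel T.

Definition proper_col (k : nat) (c : {ffun T -> 'I_k}) : bool :=
  [forall u, forall v, e u v ==> (c u != c v)].

Definition colourable (k : nat) : bool :=
  [exists c : {ffun T -> 'I_k}, proper_col c].

(* chromatic number: least k admitting a proper k-colouring
   (#|T| colours always suffice, so the min is over k <= #|T|) *)
Definition chi : nat :=
  \big[minn/#|T|]_(k < #|T|.+1 | colourable k) k.

Definition deg (v : T) : nat := #|[set u | e v u]|.

Definition connected_graph : Prop := forall x y : T, connect e x y.

Definition determining (k : nat) (c : {ffun T -> 'I_k}) (S : {set T}) : bool :=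
  [forall c' : {ffun T -> 'I_k},
     (proper_col c' && [forall s in S, c' s == c s]) ==> (c' == c)].

Definition critical (k : nat) (c : {ffun T -> 'I_k}) (S : {set T}) : bool :=
  minset (determining c) S.

Definition lcs (k : nat) (c : {ffun T -> 'I_k}) : nat :=
  \max_(S : {set T} | critical c S) #|S|.

Definition lcsbar (k : nat) : nat :=
  \max_(c : {ffun T -> 'I_k} | proper_col c) lcs c.

End Graphs.

Definition del_vertex {T : finType} (e : rel T) (v : T)
  : rel {x : T | x != v} :=
  fun x y => e (val x) (val y).
Arguments del_vertex {T} e v _ _.

From mathcomp Require Import all_boot.
Set Implicit Arguments. Unset Strict Implicit. Unset Printing Implicit Defensive.

(* In a proper chi-colouring every colour class contains a vertex w that is
   full, i.e. sees every other colour on its neighbourhood: otherwise each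
   vertex of the class could be recoloured and chi - 1 colours would suffice.
   For a proper colouring, [set~ w] is determining exactly when w is full, so
   the whole vertex set is never critical and lcs <= n - 1.
   If [set~ w] is critical then, for each u <> w, dropping u admits a second
   proper colouring that differs from the given one only at u and w.
   Analysing it shows that the neighbours of w carry pairwise distinct
   colours, so
   deg w = chi - 1, and that no other vertex of the colour class of w is full,
   so G \ w is (chi - 1)-colourable.
   Conversely, if chi (G \ v) = chi - 1 = deg v, colour G \ v with chi - 1
   colours and v with a new one.  Then v is full with a rainbow neighbourhood,
   and giving any u <> v the colour of v (swapping the colours of u and v when
   they are adjacent) shows that [set~ v] is critical. *)

Lemma big_minn_le (I : eqType) (r : seq I) (P : pred I) (F : I -> nat) x0 i :
  i \in r -> P i -> \big[minn/x0]_(j <- r | P j) F j <= F i.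
Proof.
elim: r => // a r IHr; rewrite inE big_cons => /orP [/eqP <- -> | ir Pi].
  exact: geq_minl.
by case: (P a); rewrite ?geq_min IHr ?orbT.
Qed.

Section Colourings.
Variables (T : finType) (e : rel T).

Lemma proper_colP k (c : {ffun T -> 'I_k}) :
  reflect (forall u v, e u v -> c u != c v) (proper_col e c).
Proof.
apply: (iffP forallP) => [Hc u v | Hc u]; first by move/forallP/(_ v)/implyP: (Hc u).
by apply/forallP => v; apply/implyP/Hc.
Qed.

Lemma colourableP k :
  reflect (exists c : {ffun T -> 'I_k}, proper_col e c) (colourable e k).
Proof. exact: existsP. Qed.

Lemma chi_le_card : chi e <= #|T|.
Proof.
rewrite /chi; elim/big_ind: _ => // [x y le_x _|i _]; first by rewrite geq_min le_x.
by rewrite -ltnS.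
Qed.

Lemma chi_le k : colourable e k -> chi e <= k.
Proof.
move=> Hk; have [lt_n_k | le_k_n] := ltnP #|T| k.
  exact: leq_trans chi_le_card (ltnW lt_n_k).
exact: (big_minn_le _ _ (mem_index_enum (Ordinal (le_k_n : k < #|T|.+1)))).
Qed.

Lemma colourable_pred_omit k (c : {ffun T -> 'I_k}) (b : 'I_k) :
  proper_col e c -> (forall x, c x != b) -> colourable e k.-1.
Proof.
case: k c b => [|k] c b; first by case: b.
move=> /proper_colP Hc Hb.
have /fin_all_exists [f Hf] : forall x, exists j : 'I_k, lift b j = c x.
  move=> x; have [|j -> _] := @unlift_some _ b (c x); last by exists j.
  by rewrite eq_sym.
apply/colourableP; exists [ffun x => f x]; apply/proper_colP => u v euv.
by rewrite !ffunE; apply: contra (Hc u v euv); rewrite -Hf -(Hf v) => /eqP ->.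
Qed.

Definition full k (c : {ffun T -> 'I_k}) (w : T) : bool :=
  [forall b, (b != c w) ==> [exists u, e w u && (c u == b)]].

Lemma fullP k (c : {ffun T -> 'I_k}) w :
  reflect (forall b, b != c w -> exists2 u, e w u & c u = b) (full c w).
Proof.
apply: (iffP forallP) => [Hw b /(implyP (Hw b))/existsP [u /andP [ewu /eqP]] | Hw b].
  by exists u.
by apply/implyP => /Hw [u ewu Hu]; apply/existsP; exists u; rewrite ewu Hu eqxx.
Qed.

Lemma fullPn k (c : {ffun T -> 'I_k}) w :
  reflect (exists2 b, b != c w & forall u, e w u -> c u != b) (~~ full c w).
Proof.
apply: (iffP idP) => [|[b Hb Hu]]; last first.
  by apply/fullP => /(_ b Hb) [u /Hu/eqP].
rewrite negb_forall => /existsP [b].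
rewrite negb_imply negb_exists => /andP [Hb /forallP Hu].
by exists b => // u ewu; have := Hu u; rewrite ewu.
Qed.

Lemma determiningP k (c : {ffun T -> 'I_k}) (S : {set T}) :
  reflect (forall c', proper_col e c' -> {in S, c' =1 c} -> c' = c)
          (determining e c S).
Proof.
apply: (iffP forallP) => [Hd c' Hc' Hag | Hd c'].
  apply/eqP; apply: (implyP (Hd c')); rewrite Hc'.
  by apply/forallP => s; apply/implyP => /Hag ->.
apply/implyP => /andP [Hc' /forallP Hag]; apply/eqP/Hd => // s sS.
exact/eqP/(implyP (Hag s)).
Qed.

Lemma determiningPn k (c : {ffun T -> 'I_k}) (S : {set T}) :
  reflect (exists c', [/\ proper_col e c', {in S, c' =1 c} & c' != c])
          (~~ determining e c S).
Proof.
apply: (iffP idP) => [|[c' [Hc' Hag /eqP Hne]]]; last first.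
  by apply/negP => /determiningP/(_ c' Hc' Hag).
rewrite negb_forall => /existsP [c']; rewrite negb_imply => /andP [/andP [Hc' Hag] Hne].
by exists c'; split => // s sS; apply/eqP/(implyP (forallP Hag s)).
Qed.

Lemma determiningS k (c : {ffun T -> 'I_k}) (A B : {set T}) :
  A \subset B -> determining e c A -> determining e c B.
Proof.
move=> AB /determiningP Hd; apply/determiningP => c' Hc' Hag.
by apply: Hd Hc' _ => s /(subsetP AB)/Hag.
Qed.

Lemma criticalP k (c : {ffun T -> 'I_k}) (S : {set T}) :
  reflect (determining e c S /\ forall u, u \in S -> ~~ determining e c (S :\ u))
          (critical e c S).
Proof.
apply: (iffP minsetP) => -[HS Hmin]; split=> //.
  by move=> u uS; apply/negP => /Hmin/(_ (subD1set S u))/setP/(_ u); rewrite setD11 uS.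
move=> B HB BS; apply/eqP; rewrite eqEsubset BS.
apply/subsetP => u uS; apply: contraT => uB.
case/negP: (Hmin u uS); apply: determiningS HB; apply/subsetP => x xB.
by rewrite in_setD1 (subsetP BS) // andbT; apply: contraNneq uB => <-.
Qed.

Hypothesis e_sym : symmetric e.

Lemma proper_recolour k (c : {ffun T -> 'I_k}) w b :
  proper_col e c -> (forall u, e w u -> c u != b) ->
  proper_col e [ffun x => if x == w then b else c x].
Proof.
move=> /proper_colP Hc Hb; apply/proper_colP => x y exy; rewrite !ffunE.
case: (eqVneq x w) => [xw | _]; case: (eqVneq y w) => [yw | _]; last exact: Hc.
- by have := Hc x y exy; rewrite xw yw eqxx.
- by rewrite eq_sym Hb // -xw.
- by apply: Hb; rewrite e_sym -yw.
Qed.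

Lemma colourable_pred_nonfull_class k (c : {ffun T -> 'I_k}) b :
  proper_col e c -> (forall x, c x = b -> ~~ full c x) -> colourable e k.-1.
Proof.
move=> Hc Hb.
have /fin_all_exists [d Hd] : forall x, exists d : 'I_k,
    c x = b -> d != b /\ forall u, e x u -> c u != d.
  move=> x; case: (eqVneq (c x) b) => [/[dup] cxb /Hb/fullPn [d Hd Hu] | cxb].
    by exists d; rewrite -cxb.
  by exists b => /eqP; rewrite (negbTE cxb).
pose c' := [ffun x => if c x == b then d x else c x].
apply: (@colourable_pred_omit _ c' b) => [|x]; last first.
  by rewrite ffunE; case: (eqVneq (c x) b) => [/Hd [] |].
move/proper_colP: Hc => Hc; apply/proper_colP => x y exy; rewrite !ffunE.
case: (eqVneq (c x) b) => [cxb | _]; case: (eqVneq (c y) b) => [cyb | _].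
- by have := Hc x y exy; rewrite cxb cyb eqxx.
- by rewrite eq_sym; apply: (Hd x cxb).2.
- by apply: (Hd y cyb).2; rewrite e_sym.
- exact: Hc.
Qed.

Hypothesis e_irr : irreflexive e.

Lemma colourable_card : colourable e #|T|.
Proof.
apply/colourableP; exists [ffun x => enum_rank x]; apply/proper_colP => u v euv.
by rewrite !ffunE (inj_eq enum_rank_inj); apply: contraTneq euv => ->; rewrite e_irr.
Qed.

Lemma chi_colourable : colourable e (chi e).
Proof.
rewrite /chi; elim/big_ind: _ => [|x y Hx Hy|//]; first exact: colourable_card.
by rewrite /minn; case: ifP.
Qed.

Lemma chi_gt0 : 0 < #|T| -> 0 < chi e.
Proof.
case/card_gt0P => x _; rewrite lt0n; apply/eqP => chi0.
by have /colourableP [c _] := chi_colourable; move: (c x); rewrite chi0 => -[].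
Qed.

Lemma exists_full k (c : {ffun T -> 'I_k}) b :
  chi e = k -> proper_col e c -> exists2 w, c w = b & full c w.
Proof.
move=> chi_k Hc; case: (boolP [exists w, (c w == b) && full c w]).
  by case/existsP => w /andP [/eqP]; exists w.
rewrite negb_exists => /forallP Hn.
have /chi_le : colourable e k.-1.
  apply: (colourable_pred_nonfull_class (b := b) Hc) => x cxb.
  by have := Hn x; rewrite cxb eqxx.
by rewrite chi_k leqNgt ltn_predL (leq_ltn_trans _ (ltn_ord b)).
Qed.

Lemma determining_setC1 k (c : {ffun T -> 'I_k}) w :
  proper_col e c -> determining e c [set~ w] = full c w.
Proof.
move=> Hc; apply/idP/idP => [/determiningP Hd | /fullP Hw].
  apply: contraT => /fullPn [b Hb Hu].
  have Hag : {in [set~ w], [ffun x => if x == w then b else c x] =1 c}.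
    by move=> s; rewrite in_setC1 ffunE => /negbTE ->.
  move/ffunP/(_ w): (Hd _ (proper_recolour Hc Hu) Hag).
  by rewrite ffunE eqxx => bw; rewrite bw eqxx in Hb.
apply/determiningP => c' /proper_colP Hc' Hag; apply/ffunP => x.
have Hag' y : y != w -> c' y = c y by move=> yw; apply: Hag; rewrite in_setC1.
have [->|/Hag' //] := eqVneq x w; apply: contraTeq isT => /Hw [u ewu cu].
have uw : u != w by apply: contraTneq ewu => ->; rewrite e_irr.
by have := Hc' _ _ ewu; rewrite (Hag' u uw) cu eqxx.
Qed.

Lemma proper_swap k (c : {ffun T -> 'I_k}) u w :
  proper_col e c ->
  (forall t, e u t -> t != w -> c t != c w) ->
  (forall t, e w t -> t != u -> c t != c u) ->
  proper_col e [ffun x => c (if x == u then w else if x == w then u else x)].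
Proof.
move=> /proper_colP Hc Hu Hw; apply/proper_colP => x y exy; rewrite !ffunE.
have [yu | yu] := eqVneq y u.
  have xu : x != u by apply: contraTneq exy => xu; rewrite xu yu e_irr.
  rewrite /= (negbTE xu); case: ifP => [/eqP xw | /negbT xw].
    by rewrite eq_sym Hc // -xw -yu.
  by apply: Hu; rewrite // e_sym -yu.
have [yw | yw] := eqVneq y w.
  have xw : x != w by apply: contraTneq exy => xw; rewrite xw yw e_irr.
  rewrite /= (negbTE xw); case: ifP => [/eqP xu | /negbT xu].
    by rewrite eq_sym Hc // -xu -yw.
  by apply: Hw; rewrite // e_sym -yw.
case: ifP => [/eqP xu | _].
  by rewrite eq_sym Hu // -xu.
by case: ifP => [/eqP xw | _]; [rewrite eq_sym Hw // -xw | apply: Hc].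
Qed.

Lemma nbhd_injP k (c : {ffun T -> 'I_k}) w :
  proper_col e c -> full c w ->
  reflect {in [set u | e w u] &, injective c} (deg e w == k - 1).
Proof.
move=> /proper_colP Hc /fullP Hw.
have -> : k - 1 = #|c @: [set u | e w u]|.
  suff -> : c @: [set u | e w u] = [set~ c w] by rewrite cardsC1 card_ord subn1.
  apply/setP => b; rewrite in_setC1; apply/imsetP/idP => [[u] | /Hw [u ewu <-]].
    by rewrite inE => ewu ->; rewrite eq_sym Hc.
  by exists u; rewrite ?inE.
by rewrite eq_sym; apply: imset_injP.
Qed.

End Colourings.

Section DeleteVertex.
Variables (T : finType) (e : rel T) (v : T).

Lemma del_vertex_sym : symmetric e -> symmetric (del_vertex e v).
Proof. by move=> e_sym x y; apply: e_sym. Qed.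

Lemma del_vertex_irr : irreflexive e -> irreflexive (del_vertex e v).
Proof. by move=> e_irr x; apply: e_irr. Qed.

Definition restrict_colouring k (c : {ffun T -> 'I_k}) :
  {ffun {x : T | x != v} -> 'I_k} := [ffun y => c (val y)].

Lemma proper_restrict_colouring k (c : {ffun T -> 'I_k}) :
  proper_col e c -> proper_col (del_vertex e v) (restrict_colouring c).
Proof. by move/proper_colP=> Hc; apply/proper_colP => x y exy; rewrite !ffunE Hc. Qed.

Lemma full_restrict_colouring k (c : {ffun T -> 'I_k}) y :
  full (del_vertex e v) (restrict_colouring c) y -> full e c (val y).
Proof.
move/fullP=> Hy; apply/fullP => b Hb.
have [|u eyu] := Hy b; first by rewrite ffunE.
by rewrite ffunE; exists (val u).
Qed.

Definition extend_colouring m (d : {ffun {x : T | x != v} -> 'I_m}) :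
  {ffun T -> 'I_m.+1} :=
  [ffun x => if insub x is Some y then widen_ord (leqnSn m) (d y) else ord_max].

Lemma extend_colouring_neq m (d : {ffun {x : T | x != v} -> 'I_m}) x :
  x != v -> extend_colouring d x != extend_colouring d v.
Proof.
move=> xv; rewrite !ffunE (@insubF _ _ _ v) ?eqxx // (insubT (fun x => x != v) xv) /=.
by apply/eqP => /(congr1 val) /= dm; have := ltn_ord (d (Sub x xv)); rewrite dm ltnn.
Qed.

Lemma proper_extend_colouring m (d : {ffun {x : T | x != v} -> 'I_m}) :
  irreflexive e -> proper_col (del_vertex e v) d -> proper_col e (extend_colouring d).
Proof.
move=> e_irr /proper_colP Hd; apply/proper_colP => x y.
have [-> | xv] := eqVneq x v; have [-> | yv] := eqVneq y v => exy.
- by rewrite e_irr in exy.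
- by rewrite eq_sym extend_colouring_neq.
- exact: extend_colouring_neq.
have /Hd : del_vertex e v (Sub x xv) (Sub y yv) by [].
rewrite !ffunE (insubT (fun x => x != v) xv) (insubT (fun x => x != v) yv).
by apply: contra => /eqP/(congr1 val) /= /val_inj ->.
Qed.

Lemma chi_le_del_vertex : irreflexive e -> chi e <= (chi (del_vertex e v)).+1.
Proof.
move=> e_irr; have /colourableP [d Hd] := chi_colourable (del_vertex_irr e_irr).
by apply/chi_le/colourableP; exists (extend_colouring d); apply: proper_extend_colouring.
Qed.

End DeleteVertex.

Lemma lcsbar_attained (T : finType) (e : rel T) k :
  colourable e k ->
  exists (c : {ffun T -> 'I_k}) (S : {set T}),
    [/\ proper_col e c, critical e c S & #|S| = lcsbar e k].
Proof.
case/colourableP => c0 Hc0.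
rewrite /lcsbar (bigmax_eq_arg c0 Hc0); case: arg_maxnP => // c Hc _.
have /minset_exists [S0 HS0 _] : determining e c setT.
  by apply/determiningP => c' _ Hag; apply/ffunP => x; apply: Hag; rewrite in_setT.
rewrite /lcs (bigmax_eq_arg S0 HS0); case: arg_maxnP => // S HS _.
by exists c, S.
Qed.

Lemma setC1_of_card (T : finType) (S : {set T}) :
  0 < #|T| -> #|S| = #|T| - 1 -> exists w, S = [set~ w].
Proof.
move=> T_gt0 cardS; have /cards1P [w Sw] : #|~: S| == 1.
  by rewrite cardsCs setCK cardS subKn.
by exists w; rewrite -Sw setCK.
Qed.

Section CriticalSets.
Variables (T : finType) (e : rel T).
Hypotheses (e_sym : symmetric e) (e_irr : irreflexive e).

Lemma lcsbar_le : 0 < #|T| -> lcsbar e (chi e) <= #|T| - 1.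
Proof.
move=> T_gt0; have [x0 _] := card_gt0P T_gt0.
apply/bigmax_leqP => c Hc; apply/bigmax_leqP => S /criticalP [_ HS].
rewrite leq_subRL // add1n -cardsT; apply: proper_card; rewrite properT.
apply/negP => /eqP ST; have [w _] := exists_full e_sym (c x0) erefl Hc.
by rewrite -(determining_setC1 e_sym e_irr w Hc) -setTD -ST; apply/negP/HS; rewrite ST.
Qed.

Section SetC1.
Variables (k : nat) (c : {ffun T -> 'I_k}) (w : T).
Hypotheses (chi_k : chi e = k) (Hc : proper_col e c).

Lemma critical_setC1_dichotomy u :
  critical e c [set~ w] -> u != w ->
  ~~ full e c u \/ (e w u /\ {in [set t | e w t], forall t, c t = c u -> t = u}).
Proof.
move=> /criticalP [Hd Hmin] uw.
have /fullP Hw : full e c w by rewrite -determining_setC1.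
have /determiningPn [c' [/proper_colP Hc' Hag Hne]] : ~~ determining e c ([set~ w] :\ u).
  by apply: Hmin; rewrite in_setC1.
have {}Hag x : x != u -> x != w -> c' x = c x.
  by move=> xu xw; apply: Hag; rewrite !inE xu xw.
have [cw | cw] := eqVneq (c' w) (c w).
  left; apply/fullPn; exists (c' u) => [|t eut].
    apply: contra Hne => /eqP cu; apply/eqP/ffunP => x.
    by have [-> // | xu] := eqVneq x u; have [-> // | xw] := eqVneq x w; apply: Hag.
  have [tw | tw] := eqVneq t w; first by rewrite tw -cw eq_sym Hc' // -tw.
  have tu : t != u by apply: contraTneq eut => ->; rewrite e_irr.
  by rewrite -Hag // eq_sym Hc'.
have [t ewt ct] := Hw _ cw.
have Hnbhd t' : e w t' -> c t' = c' w -> t' = u.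
  move=> ewt' ct'; apply: contraTeq (Hc' _ _ ewt') => t'u.
  have t'w : t' != w by apply: contraTneq ewt' => ->; rewrite e_irr.
  by rewrite (Hag t' t'u t'w) ct' eqxx.
have tu := Hnbhd t ewt ct; right; rewrite -tu ct; split=> // t'; rewrite inE => ewt'.
by rewrite tu; apply: Hnbhd.
Qed.

Lemma critical_setC1_nbhd_inj :
  critical e c [set~ w] -> {in [set u | e w u] &, injective c}.
Proof.
move=> Hcrit x y; rewrite !inE => ewx ewy cxy.
have [z cz Hz] := exists_full e_sym (c x) chi_k Hc.
have zw : z != w.
  by move/proper_colP: Hc => /(_ w x ewx); apply: contraTneq => <-; rewrite cz eqxx.
have [/negP // | [_ Hnbhd]] := critical_setC1_dichotomy Hcrit zw.
by rewrite (Hnbhd x) ?inE ?cz // (Hnbhd y) ?inE // -cxy cz.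
Qed.

Lemma critical_setC1_deg : critical e c [set~ w] -> deg e w = k - 1.
Proof.
move=> Hcrit; have Hw : full e c w.
  by rewrite -determining_setC1 //; case/criticalP: Hcrit.
exact/eqP/(nbhd_injP Hc Hw)/critical_setC1_nbhd_inj.
Qed.

Lemma critical_setC1_chi_del_vertex :
  critical e c [set~ w] -> chi (del_vertex e w) = k - 1.
Proof.
move=> Hcrit; apply/eqP; rewrite eqn_leq leq_subLR add1n -chi_k chi_le_del_vertex //.
rewrite andbT subn1 chi_k; apply/chi_le.
apply: (@colourable_pred_nonfull_class _ _ (del_vertex_sym e_sym) k _ (c w)
          (proper_restrict_colouring w Hc)).
move=> y; rewrite ffunE => cyw.
have [Hy | [ewy _]] := critical_setC1_dichotomy Hcrit (valP y).
  by apply: contra Hy; apply: full_restrict_colouring.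
by move/proper_colP: Hc => /(_ w (val y) ewy); rewrite cyw eqxx.
Qed.

Lemma critical_setC1_unique_colour :
  (forall x, x != w -> c x != c w) -> deg e w = k - 1 -> critical e c [set~ w].
Proof.
move=> Huniq Hdeg.
have Hw : full e c w.
  have [w' cw' Hw'] := exists_full e_sym (c w) chi_k Hc.
  suff <- : w' = w by [].
  by apply/eqP/negPn/negP => /Huniq; rewrite cw' eqxx.
have /(nbhd_injP Hc Hw) Hinj : deg e w == k - 1 by apply/eqP.
apply/criticalP; split=> [|u]; first by rewrite determining_setC1.
rewrite in_setC1 => uw.
have recolour c' : proper_col e c' -> c' u = c w ->
    (forall x, x != u -> x != w -> c' x = c x) -> ~~ determining e c ([set~ w] :\ u).
  move=> Hc' c'u Hag; apply/determiningPn; exists c'; split=> //.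
    by move=> x; rewrite !inE => /andP [xu xw]; apply: Hag.
  by apply: contraTneq (Huniq u uw) => c'c; rewrite -c'u c'c eqxx.
have [ewu | newu] := boolP (e w u).
  apply: (recolour [ffun x => c (if x == u then w else if x == w then u else x)]).
  - apply: proper_swap => // [t _ /Huniq // | t ewt tu].
    by apply: contra tu => /eqP ctu; apply/eqP/Hinj; rewrite ?inE.
  - by rewrite ffunE eqxx.
  - by move=> x xu xw; rewrite ffunE (negbTE xu) (negbTE xw).
apply: (recolour [ffun x => if x == u then c w else c x]).
- apply: proper_recolour => // t eut; apply: Huniq.
  by apply: contraNneq newu => tw; rewrite e_sym -tw.
- by rewrite ffunE eqxx.
- by move=> x xu _; rewrite ffunE (negbTE xu).
Qed.

End SetC1.

End CriticalSets.

Theorem theorem3 (T : finType) (e : rel T)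
  (e_sym : symmetric e) (e_irr : irreflexive e)
  (e_conn : connected_graph e) (T_nonempty : 0 < #|T|) :
  lcsbar e (chi e) = #|T| - 1 <->
  exists v : T, chi (del_vertex e v) = chi e - 1 /\ chi e - 1 = deg e v.
Proof.
split=> [lcs_n | [v [chi_del deg_v]]].
  have [c [S [Hc HS cardS]]] := lcsbar_attained (chi_colourable e_irr).
  have [w Sw] := setC1_of_card T_nonempty (etrans cardS lcs_n); rewrite Sw in HS.
  exists w; split.
    exact: (critical_setC1_chi_del_vertex e_sym e_irr (erefl (chi e)) Hc HS).
  exact/esym/(critical_setC1_deg e_sym e_irr (erefl (chi e)) Hc HS).
apply/eqP; rewrite eqn_leq lcsbar_le //=.
have /colourableP [d Hd] := chi_colourable (del_vertex_irr (v := v) e_irr).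
have chi_m : chi e = (chi (del_vertex e v)).+1.
  by rewrite chi_del subn1 prednK // (chi_gt0 e_irr).
have Hc := proper_extend_colouring e_irr Hd.
have HS : critical e (extend_colouring d) [set~ v].
  apply: (critical_setC1_unique_colour e_sym e_irr chi_m Hc) => [x|].
    exact: extend_colouring_neq.
  by rewrite -deg_v chi_m.
rewrite chi_m subn1 -(cardsC1 v); apply: leq_trans (leq_bigmax_cond _ Hc).
exact: leq_bigmax_cond HS.
Qed.
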